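(* Let $M$ be a matroid on a finite set $E$ with $r(M)>0$ and let $B\in\mathcal{B}(M)$. Then $|F_M(B)|=r(M)$.
   Context: For a matroid $M$: $\mathcal{I}(M)$ its independent sets, $\mathcal{B}(M)$ its bases, $r(M)$ the size of a base, $r(X)$ the rank of $X\subseteq E$. $s(M)=\{A\in\mathcal{I}(M): |A|=r(M)-1\}$; $K_M(X)=\{a\in E: r(X\cup\{a\})=r(X)+1\}$; $F_M(B)=\{K_M(X): X\in s(M),\ X\subseteq B\}$ (a set of sets, so $|F_M(B)|$ counts distinct sets). *)

(* Matroids on a finite ground set E, given by the type T : finType
   (E = [set: T]), via the independence axioms. *)
From mathcomp Require Import all_boot.
Set Implicit Arguments. Unset Strict Implicit. Unset Printing Implicit Defensive.

Definition matroid_axioms (T : finType) (I : {set {set T}}) : Prop :=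
  [/\ set0 \in I,
      (forall A B : {set T}, B \in I -> A \subset B -> A \in I)
    & (forall A B : {set T}, A \in I -> B \in I -> #|A| < #|B| ->
         exists2 x, x \in B :\: A & x |: A \in I)].

Record matroid (T : finType) := Matroid {
  indep : {set {set T}};
  matroid_ax : matroid_axioms indep }.

Section MatroidDefs.
Variables (T : finType) (M : matroid T).

Definition mrank (X : {set T}) : nat :=
  \max_(A in indep M | A \subset X) #|A|.

Definition mrankM : nat := mrank [set: T].

Definition bases : {set {set T}} :=
  [set B in indep M | [forall C in indep M, (B \subset C) ==> (C == B)]].

Definition sM : {set {set T}} := [set A in indep M | #|A| == mrankM.-1].

Definition KM (X : {set T}) : {set T} :=
  [set a | mrank (a |: X) == (mrank X).+1].

Definition FM (B : {set T}) : {set {set T}} :=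
  [set KM X | X in [set X in sM | X \subset B]].

End MatroidDefs.

From mathcomp Require Import all_boot.
Set Implicit Arguments. Unset Strict Implicit. Unset Printing Implicit Defensive.

(* The sets of s(M) inside a basis B are exactly the B :\ b with b \in B, and
   b \in K(B :\ b); since no element of X lies in K(X), b' \notin K(B :\ b) for
   b' != b in B. Hence b |-> K(B :\ b) is a bijection from B onto F(B). *)

Section Matroid.
Variables (T : finType) (M : matroid T).

Lemma indep_subset (A B : {set T}) : B \in indep M -> A \subset B -> A \in indep M.
Proof. by case: (matroid_ax M) => _ subI _; exact: subI. Qed.

Lemma mrank_indep (A : {set T}) : A \in indep M -> mrank M A = #|A|.
Proof.
move=> indA; apply/eqP; rewrite eqn_leq; apply/andP; split.
  by apply/bigmax_leqP => C /andP [_ CsubA]; exact: subset_leq_card.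
by apply: (leq_bigmax_cond (F := fun C : {set T} => #|C|)); rewrite indA subxx.
Qed.

Lemma basis_indep (B : {set T}) : B \in bases M -> B \in indep M.
Proof. by rewrite inE => /andP []. Qed.

Lemma card_basis (B : {set T}) : B \in bases M -> #|B| = mrankM M.
Proof.
rewrite inE => /andP [indB /forallP maxB].
case: (matroid_ax M) => _ _ augment.
apply/eqP; rewrite eqn_leq; apply/andP; split.
  by apply: (leq_bigmax_cond (F := fun C : {set T} => #|C|)); rewrite indB subsetT.
apply/bigmax_leqP => A /andP [indA _]; rewrite leqNgt; apply/negP => ltBA.
have [x /setDP [_ xnB] indxB] := augment B A indB indA ltBA.
have /eqP xBeqB : x |: B == B by have := maxB (x |: B); rewrite indxB subsetUr.
by move: xnB; rewrite -xBeqB setU11.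
Qed.

Lemma notin_KM (X : {set T}) (a : T) : a \in X -> a \notin KM M X.
Proof.
by move=> aX; rewrite inE (setUidPr _) ?sub1set // eqn_leq ltnn andbF.
Qed.

Lemma mem_KM_setD1 (B : {set T}) (b : T) :
  B \in indep M -> b \in B -> b \in KM M (B :\ b).
Proof.
move=> indB bB; have indBb := indep_subset indB (subD1set B b).
by rewrite inE setD1K // !mrank_indep // (cardsD1 b B) bB.
Qed.

Lemma sM_sub_basis (B : {set T}) :
  0 < mrankM M -> B \in bases M ->
  [set X in sM M | X \subset B] = [set B :\ b | b in B].
Proof.
move=> r_gt0 basB; have cardB := card_basis basB.
have indB := basis_indep basB.
have cardB_gt0 : 0 < #|B| by rewrite cardB.
apply/setP => X; rewrite !inE; apply/andP/imsetP => [[/andP [_ /eqP cardX] XsubB]|].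
  have /cards1P [b BXeq] : #|B :\: X| == 1.
    by rewrite cardsD (setIidPr XsubB) cardX -cardB -{1}(prednK cardB_gt0) subSnn.
  have /setDP [bB _] : b \in B :\: X by rewrite BXeq set11.
  by exists b => //; rewrite -BXeq setDDr setDv set0U (setIidPr XsubB).
case=> b bB ->; split; last exact: subD1set.
by rewrite (indep_subset indB (subD1set B b)) -cardB (cardsD1 b B) bB add1n /=.
Qed.

Lemma KM_setD1_inj (B : {set T}) :
  B \in indep M -> {in B &, injective (fun b => KM M (B :\ b))}.
Proof.
move=> indB b1 b2 b1B b2B /= eqK; apply/eqP/negPn/negP => neq12.
have := mem_KM_setD1 indB b1B; rewrite eqK.
by apply/negP/notin_KM; rewrite !inE neq12 b1B.
Qed.

End Matroid.

Theorem proposition2 (T : finType) (M : matroid T) (B : {set T}) :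
  0 < mrankM M -> B \in bases M -> #|FM M B| = mrankM M.
Proof.
move=> r_gt0 basB.
rewrite /FM sM_sub_basis // -imset_comp card_in_imset ?(card_basis basB) //.
exact: KM_setD1_inj (basis_indep basB).
Qed.
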